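(* Let $I\subset\mathbb{R}$ be an interval, let $n\in\mathbb{N}$ be odd, and let $f:I\to\mathbb{R}$ be $n$-convex. Then for every $x_1$ in the interior of $I$ there exists a polynomial $p\in\Pi_n$ such that $p(x_1)=f(x_1)$ and $p(x)\le f(x)$ for all $x\in I$.
   Context: $\Pi_n$ denotes the set of real polynomials of degree at most $n$. Divided differences are defined recursively by $[x_1;f]:=f(x_1)$ and $[x_1,\dots,x_{m+1};f]:=\frac{[x_2,\dots,x_{m+1};f]-[x_1,\dots,x_m;f]}{x_{m+1}-x_1}$ for pairwise distinct points. For $n\in\mathbb{N}$, a function $f:I\to\mathbb{R}$ is called $n$-convex if $[x_1,\dots,x_{n+2};f]\ge 0$ for all pairwise distinct $x_1,\dots,x_{n+2}\in I$. *)

From HB Require Import structures.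
From mathcomp Require Import all_boot all_order all_algebra.
From mathcomp Require Import reals.
Set Implicit Arguments. Unset Strict Implicit. Unset Printing Implicit Defensive.
Import Order.TTheory GRing.Theory Num.Theory.
Local Open Scope ring_scope.

(* divdiff f x i m = [x_i, x_{i+1}, ..., x_{i+m}; f], following the recursion
   [x_1;f] = f x_1,
   [x_1,...,x_{m+1};f] = ([x_2,...,x_{m+1};f] - [x_1,...,x_m;f]) / (x_{m+1} - x_1). *)
Fixpoint divdiff (R : realType) (f : R -> R) (x : nat -> R) (i m : nat) : R :=
  match m with
  | 0 => f (x i)
  | m'.+1 => (divdiff f x i.+1 m' - divdiff f x i m') / (x (i + m'.+1)%N - x i)
  end.

Definition n_convex (R : realType) (n : nat) (I : interval R) (f : R -> R) : Prop :=
  forall x : nat -> R,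
    (forall i, (i < n.+2)%N -> x i \in I) ->
    (forall i j, (i < n.+2)%N -> (j < n.+2)%N -> i != j -> x i != x j) ->
    0 <= divdiff f x 0 n.+1.

Definition in_interior (R : realType) (I : interval R) (x : R) : Prop :=
  exists e : R, 0 < e /\ forall y : R, `|y - x| < e -> y \in I.

From HB Require Import structures.
From mathcomp Require Import all_boot all_order all_algebra.
From mathcomp Require Import reals.
From mathcomp Require Import zify ring lra.
Import Order.TTheory GRing.Theory Num.Theory.
Local Open Scope ring_scope.
Set Implicit Arguments. Unset Strict Implicit. Unset Printing Implicit Defensive.

(* Taking slopes at x1 lowers the order of convexity: for an (m+1)-convex f there is a
   value c such that y |-> [x1, y; f], extended by c at x1, is m-convex. The admissible c
   are those above the value at x1 of the polynomial interpolating this slope on nodes S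
   when prod_(s in S) (x1 - s) > 0, and below it when the product is negative. Such c
   exists: moving the nodes towards x1 pushes that value in the direction of the sign of
   the product, and near x1, where x1 is interior and divided differences stay bounded,
   the value hardly depends on the nodes. Two slope steps write
   f(y) = f(x1) + (y - x1) (c + (y - x1) h(y)) with h (n-2)-convex, so induction on odd n,
   starting from n = 1 where h >= 0, yields the polynomial minorant. *)

Lemma perm_consCA (T : eqType) (u v : T) s : perm_eq [:: u, v & s] [:: v, u & s].
Proof. exact: permEl (perm_catCA [:: u] [:: v] s). Qed.

Ltac perm_by_count := apply/permP => ?; rewrite /= ?count_cat /= -?cats1 ?count_cat /=; ring.
Ltac mem_by_cases := let y := fresh "y" in let Hy := fresh "Hy" in
  move=> y Hy; rewrite ?(mem_cat, mem_rcons, inE) in Hy *;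
  repeat (case/orP: Hy => Hy); rewrite ?Hy ?orbT.

Section DividedDifferences.
Variable R : realType.
Implicit Types (f : R -> R) (a b c d : R) (s : seq R).

(* The symmetric (Lagrange) form of [divdiff], see [divdiff_ddiff]. *)
Definition ddiff f s : R := \sum_(a <- s) f a / \prod_(b <- s | b != a) (a - b).

Lemma prod_sub_neq0 a s : a \notin s -> \prod_(b <- s) (a - b) != 0.
Proof.
move=> as_; rewrite prodf_seq_neq0; apply/allP => b bs /=.
by rewrite subr_eq0; apply: contraNneq as_ => ->.
Qed.

Lemma ddiff_perm f s s' : perm_eq s s' -> ddiff f s = ddiff f s'.
Proof.
move=> pss; rewrite /ddiff (perm_big _ pss); apply: eq_bigr => a _.
by rewrite (perm_big _ pss).
Qed.

Lemma ddiff1 f a : ddiff f [:: a] = f a.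
Proof. by rewrite /ddiff !big_seq1 big_cons big_nil eqxx divr1. Qed.

Lemma ddiff_cons2 f a b s : uniq [:: a, b & s] ->
  ddiff f [:: a, b & s] = (ddiff f (a :: s) - ddiff f (b :: s)) / (a - b).
Proof.
rewrite /= !inE negb_or => /andP[/andP[ab as_] /andP[bs _]].
have ab0 : a - b != 0 by rewrite subr_eq0.
have ba0 : b - a != 0 by rewrite subr_eq0 eq_sym.
have notin_prod d c : d \notin s -> c \in s ->
    \prod_(e <- d :: s | e != c) (c - e) = (c - d) * \prod_(e <- s | e != c) (c - e).
  by move=> ds cs; rewrite big_cons ifT //; apply: contraNneq ds => ->.
have prod_s d : d \notin s -> \prod_(e <- s | e != d) (d - e) = \prod_(e <- s) (d - e).
  move=> ds; rewrite big_seq_cond [RHS]big_seq; apply: eq_bigl => e /=.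
  by case es: (e \in s); rewrite ?andbT //; apply: contraNneq ds => <-.
rewrite /ddiff !big_cons !eqxx /= eq_sym ab !prod_s //.
have Pa := prod_sub_neq0 as_; have Pb := prod_sub_neq0 bs.
have -> : \sum_(c <- s) f c / \prod_(e <- [:: a, b & s] | e != c) (c - e) =
  (\sum_(c <- s) f c / \prod_(e <- a :: s | e != c) (c - e) -
   \sum_(c <- s) f c / \prod_(e <- b :: s | e != c) (c - e)) / (a - b).
  rewrite -sumrB mulr_suml big_seq [RHS]big_seq; apply: eq_bigr => c cs.
  rewrite big_cons ifT; last by apply: contraNneq as_ => ->.
  rewrite !notin_prod //.
  have ca : c - a != 0 by rewrite subr_eq0; apply: contraNneq as_ => <-.
  have cb : c - b != 0 by rewrite subr_eq0; apply: contraNneq bs => <-.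
  have Pc : \prod_(e <- s | e != c) (c - e) != 0.
    by rewrite prodf_seq_neq0; apply/allP => e _ /=; apply/implyP; rewrite subr_eq0 eq_sym.
  by field; rewrite ab0 ca cb Pc.
move: (\sum_(c <- s) _) (\sum_(c <- s) _) => S1 S2.
by field; rewrite ab0 Pa Pb ba0.
Qed.

Lemma ddiff2 f a b : a != b -> ddiff f [:: a; b] = (f a - f b) / (a - b).
Proof. by move=> ab; rewrite ddiff_cons2 ?ddiff1 //= inE andbT. Qed.

Lemma divdiff_ddiff f (x : nat -> R) m i :
  uniq (map x (iota i m.+1)) -> divdiff f x i m = ddiff f (map x (iota i m.+1)).
Proof.
elim: m i => [|m IH] i; first by rewrite /= ddiff1.
have iotaE : iota i m.+2 = i :: (iota i.+1 m ++ [:: i + m.+1]%N).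
  by rewrite -[m.+2](addn1 m.+1) iotaD.
rewrite iotaE map_cons map_cat /= => U.
set mid := map x (iota i.+1 m) in U *.
have P : perm_eq (x i :: mid ++ [:: x (i + m.+1)%N]) (x (i + m.+1)%N :: x i :: mid).
  by rewrite -cat_cons perm_catC.
rewrite (ddiff_perm _ P) ddiff_cons2; last by rewrite -(perm_uniq P).
have iotaE' : map x (iota i.+1 m.+1) = mid ++ [:: x (i + m.+1)%N].
  by rewrite -(addn1 m) iotaD map_cat /= !addn1 addSnnS.
rewrite IH iotaE'; last by case/andP: U.
rewrite IH; last by move: U; rewrite /= mem_cat negb_or cat_uniq => /and3P[/andP[-> _] -> _].
by congr ((_ - _) / _); apply: ddiff_perm; rewrite /= perm_catC.
Qed.

Definition seq_convex m (I : interval R) f : Prop :=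
  forall s, uniq s -> size s = m.+2 -> {subset s <= I} -> 0 <= ddiff f s.

Lemma n_convex_seq_convex n (I : interval R) f : n_convex n I f -> seq_convex n I f.
Proof.
move=> fconv s us ss sI.
have sE : mkseq (nth 0 s) n.+2 = s by rewrite -ss mkseq_nth.
have := fconv (nth 0 s); rewrite divdiff_ddiff -/(mkseq _ _) sE //; apply.
  by move=> i ilt; apply: sI; apply: mem_nth; rewrite ss.
by move=> i j il jl ij; rewrite nth_uniq ?ss.
Qed.

Definition harmonic_nodes a d k : seq R := mkseq (fun i => a + d / i.+1%:R) k.

Lemma div_natS_inj d (i j : nat) : d != 0 -> d / i.+1%:R = d / j.+1%:R -> i = j.
Proof.
move=> d0 /(congr1 (fun z => d^-1 * z)); rewrite !mulKf // => /invr_inj /eqP.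
by rewrite eqr_nat => /eqP [].
Qed.

Lemma harmonic_nodes_uniq a d k : d != 0 -> uniq (harmonic_nodes a d k).
Proof. by move=> d0; apply: mkseq_uniq => i j /= /addrI; apply: div_natS_inj. Qed.

Lemma harmonic_nodesP a d k y : y \in harmonic_nodes a d k -> exists i, y = a + d / i.+1%:R.
Proof. by case/mapP => i _ ->; exists i. Qed.

Lemma div_natS_bounds d (i : nat) : 0 < d -> 0 < d / i.+1%:R <= d.
Proof.
move=> d0; rewrite divr_gt0 ?ltr0n //= ler_pdivrMr ?ltr0n // ler_peMr ?(ltW d0) //.
by rewrite ler1n.
Qed.

Section Monotonicity.
Variables (m : nat) (I : interval R) (f : R -> R).
Hypothesis fconv : seq_convex m I f.

Lemma ddiff_le_cons a b w : a < b -> uniq [:: a, b & w] -> size w = m ->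
  {subset [:: a, b & w] <= I} -> ddiff f (a :: w) <= ddiff f (b :: w).
Proof.
move=> ab U sw wI.
have P := perm_consCA a b w.
have U' : uniq [:: b, a & w] by rewrite -(perm_uniq P).
have := fconv U'; rewrite ddiff_cons2 // -sw => /(_ erefl).
rewrite pmulr_lge0 ?invr_gt0 ?subr_gt0 // subr_ge0; apply.
by move=> y; rewrite -(perm_mem P); apply: wI.
Qed.

Lemma ddiff_le_shift s t u : size s = size t -> (forall x y, x \in s -> y \in t -> x < y) ->
  uniq (s ++ u) -> uniq (t ++ u) -> size (s ++ u) = m.+1 ->
  {subset s ++ t ++ u <= I} -> ddiff f (s ++ u) <= ddiff f (t ++ u).
Proof.
elim: s t u => [|a s IH] [|b t] u //= [st] lt U1 U2 sz sI.
have ab : a < b by apply: lt; rewrite inE eqxx.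
have bs : b \notin s.
  by apply/negP => bs; have := lt b b; rewrite !inE bs eqxx orbT ltxx => /(_ isT isT).
have bsu : b \notin s ++ u.
  by rewrite mem_cat negb_or bs /=; move: U2; rewrite /= mem_cat negb_or => /andP[/andP[_ ->]].
have U3 : uniq [:: a, b & s ++ u].
  rewrite /= inE negb_or lt_eqF //=; case/andP: U1 => -> ->; by rewrite bsu.
apply: (le_trans (ddiff_le_cons ab U3 _ _)).
- by move: sz; rewrite size_cat => [[]].
- by move=> y yy; apply: sI; move: y yy; mem_by_cases.
have P1 : perm_eq (b :: s ++ u) (s ++ b :: u) by rewrite (perm_catCA [:: b]).
have P2 : perm_eq (b :: t ++ u) (t ++ b :: u) by rewrite (perm_catCA [:: b]).
rewrite (ddiff_perm _ P1) (ddiff_perm _ P2); apply: IH => //.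
- by move=> x y xs yt; apply: lt; rewrite inE ?xs ?yt ?orbT.
- by rewrite -(perm_uniq P1) /= bsu; case/andP: U1.
- by rewrite -(perm_uniq P2).
- by rewrite size_cat /= addnS -size_cat.
- by move=> y yy; apply: sI; move: y yy; mem_by_cases.
Qed.

(* Monotonicity in each node squeezes [ddiff f Z] between its values at fixed nodes just
   left and just right of the ball. *)
Lemma ddiff_bounded_near x1 e : 0 < e -> (forall y, `|y - x1| < e -> y \in I) ->
  exists K, forall Z, uniq Z -> size Z = m.+1 ->
    (forall z, z \in Z -> `|z - x1| <= e / 2) -> `|ddiff f Z| <= K.
Proof.
move=> e0 ball.
set Zr := harmonic_nodes (x1 + e / 2) (e / 4) m.+1.
set Zl := harmonic_nodes (x1 - e / 2) (- (e / 4)) m.+1.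
exists (`|ddiff f Zl| + `|ddiff f Zr|) => Z uZ sZ wZ.
have e4 : 0 < e / 4 by rewrite divr_gt0.
have inZ z : z \in Z -> x1 - e / 2 <= z <= x1 + e / 2.
  by move/wZ; rewrite ler_norml => /andP[h1 h2]; apply/andP; split; lra.
have inZr z : z \in Zr -> x1 + e / 2 < z <= x1 + 3 * e / 4.
  case/harmonic_nodesP => i ->; have /andP[h1 h2] := div_natS_bounds i e4.
  by move: h1 h2; set q := e / 4 / _ => h1 h2; apply/andP; split; lra.
have inZl z : z \in Zl -> x1 - 3 * e / 4 <= z < x1 - e / 2.
  case/harmonic_nodesP => i ->; have /andP[h1 h2] := div_natS_bounds i e4.
  by move: h1 h2; rewrite mulNr; set q := e / 4 / _ => h1 h2; apply/andP; split; lra.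
have inI z : x1 - 3 * e / 4 <= z <= x1 + 3 * e / 4 -> z \in I.
  by case/andP => h1 h2; apply: ball; rewrite ltr_norml; apply/andP; split; lra.
have le_r : ddiff f Z <= ddiff f Zr.
  rewrite -(cats0 Z) -(cats0 Zr); apply: ddiff_le_shift;
    rewrite ?cats0 ?harmonic_nodes_uniq ?gt_eqF //.
  - by rewrite size_mkseq.
  - by move=> x y /inZ /andP[_ hx] /inZr /andP[hy _]; lra.
  - move=> y; rewrite mem_cat => /orP[/inZ|/inZr] /andP[h3 h4];
    by apply: inI; apply/andP; split; lra.
have le_l : ddiff f Zl <= ddiff f Z.
  rewrite -(cats0 Z) -(cats0 Zl); apply: ddiff_le_shift;
    rewrite ?cats0 ?harmonic_nodes_uniq ?oppr_eq0 ?gt_eqF //.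
  - by rewrite size_mkseq.
  - by move=> x y /inZl /andP[_ hx] /inZ /andP[hy _]; lra.
  - by rewrite size_mkseq.
  - move=> y; rewrite mem_cat => /orP[/inZl|/inZ] /andP[h3 h4];
    by apply: inI; apply/andP; split; lra.
have := ler_norm (ddiff f Zr); have := ler_norm (- ddiff f Zl); rewrite normrN.
have := normr_ge0 (ddiff f Zl); have := normr_ge0 (ddiff f Zr).
by rewrite ler_norml => *; apply/andP; split; lra.
Qed.

End Monotonicity.

End DividedDifferences.

Section SlopeExtrapolation.
Variables (R : realType) (f : R -> R) (x1 : R).
Implicit Types (s t y : R) (S L Y : seq R).

Definition slope c y : R := if y == x1 then c else (f y - f x1) / (y - x1).

Definition nodal S : R := \prod_(s <- S) (x1 - s).

(* The value at [x1] of the polynomial interpolating [slope c] on the nodes [S],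
   which does not depend on [c] (see [ddiff_slope_cons]). *)
Fixpoint slope_extrap S : R :=
  if S is s :: S' then slope_extrap S' + nodal S' * ddiff f [:: x1, s & S'] else 0.

Lemma nodal_cons s S : nodal (s :: S) = (x1 - s) * nodal S.
Proof. by rewrite /nodal big_cons. Qed.

Lemma nodal_perm S S' : perm_eq S S' -> nodal S = nodal S'.
Proof. by move=> P; rewrite /nodal (perm_big _ P). Qed.

Lemma nodal_neq0 S : x1 \notin S -> nodal S != 0.
Proof. exact: prod_sub_neq0. Qed.

Lemma ddiff_slope c Y : uniq (x1 :: Y) -> Y != [::] ->
  ddiff (slope c) Y = ddiff f (x1 :: Y).
Proof.
have two a : x1 != a -> ddiff (slope c) [:: a] = ddiff f [:: x1; a].
  move=> x1a; rewrite ddiff1 ddiff2 // /slope eq_sym (negbTE x1a).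
  have ax1 : a - x1 != 0 by rewrite subr_eq0 eq_sym.
  have x1a' : x1 - a != 0 by rewrite subr_eq0.
  by field; rewrite ax1 x1a'.
elim: {Y}(size Y) {-2}Y (leqnn (size Y)) => [|n IH] [|a [|b Y]] //=;
  rewrite ?inE ?andbT => sz; try by move=> x1a _; apply: two.
rewrite !negb_or => /and4P[/and3P[x1a x1b x1Y] /andP[ab aY] bY uY] _.
have U1 : uniq [:: a, b & Y] by rewrite /= !inE negb_or ab aY bY uY.
have U2 : uniq [:: x1, a & Y] by rewrite /= !inE negb_or x1a x1Y aY uY.
have U3 : uniq [:: x1, b & Y] by rewrite /= !inE negb_or x1b x1Y bY uY.
rewrite ddiff_cons2 // !IH //.
have P : perm_eq [:: x1, a, b & Y] [:: a, b, x1 & Y] := permEl (perm_catCA [:: x1] [:: a; b] Y).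
rewrite [RHS](ddiff_perm _ P) [RHS]ddiff_cons2 -?(perm_uniq P).
  by rewrite (ddiff_perm _ (perm_consCA x1 a Y)) (ddiff_perm _ (perm_consCA x1 b Y)).
by rewrite /= !inE !negb_or x1a x1b x1Y ab aY bY uY.
Qed.

Lemma ddiff_slope_cons c S : uniq (x1 :: S) ->
  ddiff (slope c) (x1 :: S) = (c - slope_extrap S) / nodal S.
Proof.
elim: S => [|s S IH] U; first by rewrite ddiff1 /slope eqxx /nodal big_nil subr0 divr1.
move: (U); rewrite /= inE negb_or => /andP[/andP[x1s x1S] /andP[sS uS]].
have U1 : uniq (x1 :: S) by rewrite /= x1S.
have P := perm_consCA x1 s S.
rewrite [LHS](ddiff_perm _ P) [LHS]ddiff_cons2 -?(perm_uniq P) // IH // ddiff_slope //=.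
rewrite nodal_cons.
have h1 : nodal S != 0 by apply: nodal_neq0.
have h2 : s - x1 != 0 by rewrite subr_eq0 eq_sym.
have h3 : x1 - s != 0 by rewrite subr_eq0.
by field; rewrite h1 h2 h3.
Qed.

Lemma slope_extrap_perm S S' : uniq (x1 :: S) -> perm_eq S S' ->
  slope_extrap S = slope_extrap S'.
Proof.
move=> U P.
have P' : perm_eq (x1 :: S) (x1 :: S') by rewrite perm_cons.
have U' : uniq (x1 :: S') by rewrite -(perm_uniq P').
have := ddiff_slope_cons 0 U; rewrite (ddiff_perm _ P') ddiff_slope_cons // (nodal_perm P).
have /nodal_neq0 nS' : x1 \notin S' by case/andP: U'.
by move/(congr1 (fun z => z * nodal S')); rewrite !mulfVK // !sub0r => /oppr_inj.
Qed.

Lemma slope_extrap_exchange t s L : uniq [:: x1, t, s & L] ->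
  slope_extrap (t :: L) - slope_extrap (s :: L) =
  (nodal (s :: L) - nodal (t :: L)) * ddiff f [:: t, s, x1 & L].
Proof.
move=> U; have ts : t - s != 0.
  by rewrite subr_eq0; move: U; rewrite /= !inE !negb_or => /and4P[_ /andP[-> _] _ _].
have P : perm_eq [:: x1, t, s & L] [:: t, s, x1 & L] := permEl (perm_catCA [:: x1] [:: t; s] L).
rewrite ddiff_cons2 -?(perm_uniq P) //.
rewrite (ddiff_perm _ (perm_consCA t x1 L)) (ddiff_perm _ (perm_consCA s x1 L)).
by rewrite /= !nodal_cons; field.
Qed.

End SlopeExtrapolation.

(* [t] lies in the segment from [s] to [x1], excluding [x1]. *)
Definition closer (R : realType) (x1 s t : R) : bool :=
  (0 <= (x1 - s) * (t - s)) && (0 < (x1 - s) * (x1 - t)).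

Section Approach.
Variables (R : realType) (x1 d : R).
Hypothesis d_gt0 : 0 < d.
Implicit Types (s t : R) (S : seq R).

(* The [k]-th node of [S] is replaced by the point at distance [d / (i + 2k).+1] from
   [x1] on the same side; lists started at odd and at even [i] are thus disjoint. *)
Fixpoint approach i S : seq R :=
  if S is s :: S' then
    (if s < x1 then x1 - d / i.+1%:R else x1 + d / i.+1%:R) :: approach i.+2 S'
  else [::].

Lemma size_approach i S : size (approach i S) = size S.
Proof. by elim: S i => [|s S IH] i //=; rewrite IH. Qed.

Lemma approach_dist i S t : t \in approach i S -> exists k, `|t - x1| = d / (i + k.*2).+1%:R.
Proof.
elim: S i => [|s S IH] i //=; rewrite inE => /orP[/eqP ->|].
  exists 0%N; rewrite addn0; have /andP[h _] := div_natS_bounds i d_gt0.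
  by case: ifP => _; rewrite (addrC x1) addrK ?normrN gtr0_norm.
by case/IH => k ->; exists k.+1; congr (_ / _%:R); lia.
Qed.

Lemma approach_uniq i S : uniq (approach i S).
Proof.
elim: S i => [|s S IH] i //=; rewrite IH andbT.
apply/negP => /approach_dist [k]; have /andP[h _] := div_natS_bounds i d_gt0.
case: ifP => _; rewrite (addrC x1) addrK ?normrN gtr0_norm //;
  by move/(div_natS_inj (lt0r_neq0 d_gt0)); lia.
Qed.

Lemma approach_near i S t : (0 < i)%N -> t \in approach i S -> 0 < `|t - x1| < d.
Proof.
move=> i0 /approach_dist [k ->]; rewrite divr_gt0 ?ltr0n //=.
by rewrite ltr_pdivrMr ?ltr0n // ltr_pMr // ltr1n; lia.
Qed.

Lemma approach_disjoint S S' t t' : t \in approach 1 S -> t' \in approach 2 S' -> t != t'.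
Proof.
move=> /approach_dist [k hk] /approach_dist [k' hk'].
by apply/eqP => tt'; move: hk; rewrite tt' hk' => /(div_natS_inj (lt0r_neq0 d_gt0)); lia.
Qed.

Lemma approach_closer i S : (0 < i)%N -> (forall s, s \in S -> d <= `|s - x1|) ->
  all2 (closer x1) S (approach i S).
Proof.
elim: S i => [|s S IH] i //= i0 dS; apply/andP; split; last first.
  by apply: IH => // s' s'S; apply: dS; rewrite inE s'S orbT.
have := dS s (mem_head _ _); have /andP[h1 h2] := div_natS_bounds i d_gt0.
have h3 : d / i.+1%:R < d by rewrite ltr_pdivrMr ?ltr0n // ltr_pMr // ltr1n; lia.
move: h1 h2 h3; rewrite /closer; set q := d / _ => h1 h2 h3.
case: ltP => sx1; first by rewrite ltr0_norm ?subr_lt0 // => hs; apply/andP; split; nra.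
by rewrite ger0_norm ?subr_ge0 // => hs; apply/andP; split; nra.
Qed.

End Approach.

Lemma uniq_perm_catl (T : eqType) (l l1 l2 : seq T) : uniq l -> perm_eq l (l1 ++ l2) -> uniq l1.
Proof. by move=> u p; move: u; rewrite (perm_uniq p) cat_uniq => /andP[]. Qed.

Lemma mulr_self_gt0 (R : realDomainType) (p : R) : p != 0 -> 0 < p * p.
Proof. by move=> p0; rewrite lt0r mulf_neq0 //= -expr2 sqr_ge0. Qed.

Lemma signed_le_trans (R : realDomainType) (pX pY pZ vX vY vZ : R) :
  0 <= pX * (vY - vX) -> 0 < pX * pY -> 0 <= pY * (vZ - vY) -> 0 < pY * pZ ->
  0 <= pX * (vZ - vX) /\ 0 < pX * pZ.
Proof. by move=> *; split; nra. Qed.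

Section ExtrapolationMonotonicity.
Variables (R : realType) (m : nat) (I : interval R) (f : R -> R) (x1 : R).
Hypotheses (fconv : seq_convex m.+1 I f) (x1I : x1 \in I).
Local Notation V := (slope_extrap f x1).
Local Notation nodal := (nodal x1).

(* Moving nodes towards [x1] moves [V] in the direction of the sign of [nodal]. *)
Lemma slope_extrap_approach S T L : all2 (closer x1) S T ->
  uniq (x1 :: L ++ S ++ T) -> {subset L ++ S ++ T <= I} -> (size L + size S = m.+1)%N ->
  0 <= nodal (L ++ S) * (V (L ++ T) - V (L ++ S)) /\ 0 < nodal (L ++ S) * nodal (L ++ T).
Proof.
elim: S T L => [|s S IH] [|t T] L //.
  move=> _ U _ _; rewrite !cats0 subrr mulr0; split => //; apply: mulr_self_gt0.
  by apply: nodal_neq0; move: U; rewrite /= !cats0 => /andP[].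
move=> /andP[/andP[st_le st_gt] allST] U LI sz.
have UX : uniq (x1 :: L ++ s :: S) by apply: (@uniq_perm_catl _ _ _ (t :: T) U); perm_by_count.
have UY : uniq (x1 :: L ++ t :: S) by apply: (@uniq_perm_catl _ _ _ (s :: T) U); perm_by_count.
have Uex : uniq [:: x1, t, s & L ++ S] by apply: (@uniq_perm_catl _ _ _ T U); perm_by_count.
have VX : V (L ++ s :: S) = V (s :: L ++ S) by apply: slope_extrap_perm => //; perm_by_count.
have VY : V (L ++ t :: S) = V (t :: L ++ S) by apply: slope_extrap_perm => //; perm_by_count.
have nX : nodal (L ++ s :: S) = nodal (s :: L ++ S) by apply: nodal_perm; perm_by_count.
have nY : nodal (L ++ t :: S) = nodal (t :: L ++ S) by apply: nodal_perm; perm_by_count.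
have nM : nodal (L ++ S) != 0.
  by apply: nodal_neq0; move: Uex; rewrite /= !inE !negb_or => /and4P[/and3P[]].
have D_ge0 : 0 <= ddiff f [:: t, s, x1 & L ++ S].
  apply: fconv; first by apply: (@uniq_perm_catl _ _ _ [::] Uex); perm_by_count.
    by rewrite /= size_cat; move: sz => /=; lia.
  move=> y; rewrite !inE => /or3P[/eqP->|/eqP->|]; last move/orP => [/eqP->|yLS] //.
  - by apply: LI; rewrite !(mem_cat, inE) eqxx !orbT.
  - by apply: LI; rewrite !(mem_cat, inE) eqxx !orbT.
  - by apply: LI; move: y yLS; mem_by_cases.
have U' : uniq (x1 :: rcons L t ++ S ++ T).
  by apply: (@uniq_perm_catl _ _ _ [:: s] U); perm_by_count.
have LI' : {subset rcons L t ++ S ++ T <= I} by move=> y yy; apply: LI; move: y yy; mem_by_cases.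
have sz' : (size (rcons L t) + size S = m.+1)%N by rewrite size_rcons; move: sz => /=; lia.
have [h1 h2] := IH T (rcons L t) allST U' LI' sz'; rewrite !cat_rcons in h1 h2.
apply: (signed_le_trans _ (pY := nodal (L ++ t :: S)) _ h1 h2).
  rewrite nX VX VY slope_extrap_exchange // !nodal_cons.
  have -> : forall M D : R, (x1 - s) * M * (((x1 - s) * M - (x1 - t) * M) * D) =
      ((x1 - s) * (t - s)) * (M * M) * D by move=> M D; ring.
  by apply: mulr_ge0 => //; apply: mulr_ge0 => //; exact: ltW (mulr_self_gt0 nM).
rewrite nX nY !nodal_cons.
have -> : (x1 - s) * nodal (L ++ S) * ((x1 - t) * nodal (L ++ S)) =
   ((x1 - s) * (x1 - t)) * (nodal (L ++ S) * nodal (L ++ S)) by ring.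
by rewrite mulr_gt0 // mulr_self_gt0.
Qed.

End ExtrapolationMonotonicity.

Lemma nodal_norm_le (R : realType) (x1 d : R) L : 0 <= d ->
  (forall y, y \in L -> `|y - x1| <= d) -> `|nodal x1 L| <= d ^+ size L.
Proof.
move=> d0; elim: L => [|y L IH] W; first by rewrite /nodal big_nil normr1 expr0.
rewrite nodal_cons normrM exprS distrC ler_pM //; first by apply: W; rewrite inE eqxx.
by apply: IH => z zL; apply: W; rewrite inE zL orbT.
Qed.

Section NearNodes.
Variables (R : realType) (m : nat) (f : R -> R) (x1 d K : R).
Hypothesis d_ge0 : 0 <= d.
Hypothesis ddiff_bounded : forall Z, uniq Z -> size Z = m.+2 ->
  (forall z, z \in Z -> `|z - x1| <= d) -> `|ddiff f Z| <= K.
Local Notation V := (slope_extrap f x1).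

(* Exchanging one node changes [V] by [nodal] of the other [m] nodes times a difference of
   two bounded divided differences. *)
Lemma slope_extrap_near T T' L : size T = size T' ->
  (forall y, y \in L ++ T ++ T' -> `|y - x1| <= d) ->
  uniq (x1 :: L ++ T ++ T') -> (size L + size T = m.+1)%N ->
  `|V (L ++ T) - V (L ++ T')| <= (size T)%:R * (2 * K * d ^+ m).
Proof.
elim: T T' L => [|t T IH] [|t' T'] L //; first by rewrite subrr normr0 mul0r.
move=> /eqP; rewrite eqSS => /eqP sT W U sz.
have szLT : (size L + size T = m)%N by move: sz => /=; lia.
have UX : uniq (x1 :: L ++ t :: T) by apply: (@uniq_perm_catl _ _ _ (t' :: T') U); perm_by_count.
have UY : uniq (x1 :: L ++ t' :: T) by apply: (@uniq_perm_catl _ _ _ (t :: T') U); perm_by_count.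
have VX : V (L ++ t :: T) = V (t :: L ++ T) by apply: slope_extrap_perm => //; perm_by_count.
have VY : V (L ++ t' :: T) = V (t' :: L ++ T) by apply: slope_extrap_perm => //; perm_by_count.
have nodal_le : `|nodal x1 (L ++ T)| <= d ^+ m.
  by rewrite -szLT -size_cat; apply: nodal_norm_le => // y yLT; apply: W; move: y yLT; mem_by_cases.
have ddiff_le u : u \in [:: t; t'] -> `|ddiff f [:: x1, u & L ++ T]| <= K.
  move=> uu; apply: ddiff_bounded; [|by rewrite /= size_cat szLT|].
    move: uu; rewrite !inE => /orP[] /eqP->.
      by apply: (@uniq_perm_catl _ _ _ [::] UX); perm_by_count.
    by apply: (@uniq_perm_catl _ _ _ [::] UY); perm_by_count.
  move=> z; rewrite !inE => /or3P[/eqP->|/eqP->|zLT]; first by rewrite subrr normr0.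
    by apply: W; move: uu; rewrite !(mem_cat, inE) => /orP[] /eqP ->; rewrite eqxx ?orbT.
  by apply: W; move: z zLT; mem_by_cases.
have step : `|V (L ++ t :: T) - V (L ++ t' :: T)| <= 2 * K * d ^+ m.
  rewrite VX VY /= opprD addrACA subrr add0r -mulrBr normrM mulrC.
  have hK1 := ddiff_le t (mem_head _ _).
  have hK2 : `|ddiff f [:: x1, t' & L ++ T]| <= K by apply: ddiff_le; rewrite !inE eqxx orbT.
  by rewrite ler_pM // (le_trans (ler_normB _ _)) //; lra.
have U' : uniq (x1 :: rcons L t' ++ T ++ T').
  by apply: (@uniq_perm_catl _ _ _ [:: t] U); perm_by_count.
have W' y : y \in rcons L t' ++ T ++ T' -> `|y - x1| <= d.
  by move=> yy; apply: W; move: y yy; mem_by_cases.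
have sz' : (size (rcons L t') + size T = m.+1)%N by rewrite size_rcons addSnnS.
have := IH T' (rcons L t') sT W' U' sz'; rewrite !cat_rcons => rest.
apply: (le_trans (ler_distD (V (L ++ t' :: T)) _ _)).
have -> : (size (t :: T))%:R = (size T)%:R + 1 :> R by rewrite /= -addn1 natrD.
by rewrite mulrDl mul1r; lra.
Qed.

End NearNodes.

Lemma uniq_cat_disjoint (T : eqType) (l1 l2 : seq T) : uniq l1 -> uniq l2 ->
  (forall a b, a \in l1 -> b \in l2 -> a != b) -> uniq (l1 ++ l2).
Proof.
move=> u1 u2 l12; rewrite cat_uniq u1 u2 andbT /=; apply/hasPn => b bl2.
by apply/negP => bl1; have := l12 b b bl1 bl2; rewrite eqxx.
Qed.

Lemma ex_pos_lower_bound (R : realType) (l : seq R) (b : R) : 0 < b ->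
  (forall x, x \in l -> 0 < x) -> exists d, [/\ 0 < d, d <= b & forall x, x \in l -> d <= x].
Proof.
elim: l => [|a l IH] b0 l_gt0; first by exists b.
have [|d [d0 db dl]] := IH b0; first by move=> x xl; apply: l_gt0; rewrite inE xl orbT.
have a0 : 0 < a by apply: l_gt0; rewrite inE eqxx.
exists (Num.min d a); rewrite lt_min d0 a0 ge_min db; split => // x.
by rewrite inE => /orP[/eqP->|/dl xd]; rewrite ge_min ?lexx ?xd ?orbT.
Qed.

Lemma nodal_gt0 (R : realType) (x1 : R) S : (forall s, s \in S -> s < x1) -> 0 < nodal x1 S.
Proof. by move=> S_lt; rewrite /nodal big_seq prodr_gt0 // => s /S_lt; rewrite subr_gt0. Qed.

Section Separation.
Variables (R : realType) (I : interval R) (f : R -> R) (x1 e : R).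
Hypotheses (e_gt0 : 0 < e) (ball : forall y, `|y - x1| < e -> y \in I).
Local Notation V := (slope_extrap f x1).
Local Notation nodal := (nodal x1).

Lemma center_in_ball : x1 \in I.
Proof. by apply: ball; rewrite subrr normr0. Qed.

Lemma slope_extrap_toward m S i d : seq_convex m.+1 I f ->
  uniq (x1 :: S) -> size S = m.+1 -> {subset S <= I} -> (0 < i)%N -> 0 < d -> d <= e ->
  (forall s, s \in S -> d <= `|s - x1|) -> 0 <= nodal S * (V (approach x1 d i S) - V S).
Proof.
move=> fconv U sz SI i0 d0 de dS.
have near t : t \in approach x1 d i S -> 0 < `|t - x1| < d by apply: approach_near.
have [] := slope_extrap_approach fconv center_in_ball (L := [::]) (approach_closer d0 i0 dS).
- apply: (@uniq_cat_disjoint _ (x1 :: S)) => // [|a b]; first exact: approach_uniq.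
  move=> /[!inE] /orP[/eqP->|/dS aS] /near /andP[b0 bd]; apply/eqP => ab.
    by move: b0; rewrite -ab subrr normr0 ltxx.
  by move: aS; rewrite ab; lra.
- move=> y; rewrite /= mem_cat => /orP[/SI //|/near /andP[_ yd]].
  by apply: ball; apply: lt_le_trans de.
- by rewrite sz.
- by [].
Qed.

Lemma slope_extrap_le_single S S' : seq_convex 1 I f ->
  uniq (x1 :: S) -> size S = 1%N -> {subset S <= I} ->
  uniq (x1 :: S') -> size S' = 1%N -> {subset S' <= I} ->
  0 < nodal S -> nodal S' < 0 -> V S <= V S'.
Proof.
case: S => [|s []] // fconv U _ SI; case: S' => [|s' []] // U' _ SI' pS pS'.
have Ue : uniq [:: x1, s', s & [::]].
  move: U U' pS pS'; rewrite /= !inE !andbT !nodal_cons /nodal big_nil !mulr1 => U U' pS pS'.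
  rewrite negb_or eq_sym U eq_sym U' /=; apply/eqP => ss'; move: pS pS'; rewrite ss'; lra.
rewrite -subr_ge0 slope_extrap_exchange // mulr_ge0 ?subr_ge0 //; first lra.
apply: fconv => [||y]; first by apply: (@uniq_perm_catl _ _ _ [::] Ue); perm_by_count.
  by [].
move=> /[!inE] /or3P[] /eqP->; [apply: SI' | apply: SI | exact: center_in_ball].
  by rewrite inE.
by rewrite inE.
Qed.

Lemma slope_extrap_approach_close m S S' d K :
  size S = m.+2 -> size S' = m.+2 -> 0 < d -> d <= e / 2 ->
  (forall Z, uniq Z -> size Z = m.+3 ->
    (forall z, z \in Z -> `|z - x1| <= e / 2) -> `|ddiff f Z| <= K) ->
  `|V (approach x1 d 1 S) - V (approach x1 d 2 S')| <= (m.+2)%:R * (2 * `|K| * d ^+ m.+1).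
Proof.
move=> sz sz' d0 de HK; set T := approach x1 d 1 S; set T' := approach x1 d 2 S'.
have near1 t : t \in T -> 0 < `|t - x1| < d by apply: approach_near.
have near2 t : t \in T' -> 0 < `|t - x1| < d by apply: approach_near.
rewrite -[T]/([::] ++ T) -[T']/([::] ++ T') -[m.+2]sz -(size_approach x1 d 1 S).
apply: (@slope_extrap_near _ m.+1) => //; first exact: ltW.
- move=> Z uZ sZ Zd; apply: le_trans (ler_norm K); apply: HK => // z /Zd zd; lra.
- by rewrite !size_approach sz sz'.
- by move=> y; rewrite /= mem_cat => /orP[/near1|/near2] /andP[_ /ltW].
- apply: (@uniq_cat_disjoint _ (x1 :: T)); rewrite /= ?approach_uniq ?andbT //.
    by apply/negP => /near1; rewrite subrr normr0 ltxx.
  move=> a b /[!inE] /orP[/eqP->|aT] bT'; last exact: approach_disjoint aT bT'.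
  by apply/eqP => x1b; move: (near2 b bT'); rewrite -x1b subrr normr0 ltxx.
- by rewrite /= size_approach sz.
Qed.

(* Both node sets are moved close to [x1], where their extrapolated values nearly agree. *)
Lemma slope_extrap_le m S S' : seq_convex m.+1 I f ->
  uniq (x1 :: S) -> size S = m.+1 -> {subset S <= I} ->
  uniq (x1 :: S') -> size S' = m.+1 -> {subset S' <= I} ->
  0 < nodal S -> nodal S' < 0 -> V S <= V S'.
Proof.
case: m => [|m]; first exact: slope_extrap_le_single.
move=> fconv U sz SI U' sz' SI' pS pS'.
have [K HK] := ddiff_bounded_near fconv e_gt0 ball.
apply/ler_addgt0Pr => eps eps0.
set C := (m.+2)%:R * (2 * `|K|).
have C0 : 0 <= C by rewrite mulr_ge0 // mulr_ge0.
have [d [d0 db dS]] : exists d, [/\ 0 < d, d <= Num.min (e / 2) (Num.min 1 (eps / (C + 1)))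
    & forall r, r \in [seq `|y - x1| | y <- S ++ S'] -> d <= r].
  apply: ex_pos_lower_bound; first by rewrite !lt_min !divr_gt0 //= ?ltr01 //; lra.
  move=> _ /mapP[y yS ->]; rewrite normr_gt0 subr_eq0; apply: contraTneq yS => ->.
  by rewrite mem_cat negb_or; move: U U' => /andP[-> _] /andP[-> _].
move: db; rewrite !le_min => /and3P[de d1 deps].
have de' : d <= e by lra.
have le_approach1 : V S <= V (approach x1 d 1 S).
  have := slope_extrap_toward fconv U sz SI (isT : (0 < 1)%N) d0 de'.
  rewrite pmulr_rge0 // subr_ge0; apply => s sS.
  by apply: dS; apply: map_f; rewrite mem_cat sS.
have le_approach2 : V (approach x1 d 2 S') <= V S'.
  have := slope_extrap_toward fconv U' sz' SI' (isT : (0 < 2)%N) d0 de'.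
  rewrite nmulr_rge0 // subr_le0; apply => s sS.
  by apply: dS; apply: map_f; rewrite mem_cat sS orbT.
have small : C * d ^+ m.+1 <= eps.
  have dm : d ^+ m.+1 <= d by rewrite exprS ler_piMr ?exprn_ile1 // ltW.
  apply: le_trans (_ : C * d <= eps); first exact: ler_wpM2l.
  by move: deps; rewrite ler_pdivlMr; nra.
have := slope_extrap_approach_close sz sz' d0 de HK.
by rewrite mulrA -/C ler_norml => /andP[_ close]; lra.
Qed.

Lemma ex_nodes_nodal_pos_neg m : exists S0 S1,
  [/\ uniq (x1 :: S0), size S0 = m.+1, {subset S0 <= I} & 0 < nodal S0] /\
  [/\ uniq (x1 :: S1), size S1 = m.+1, {subset S1 <= I} & nodal S1 < 0].
Proof.
pose H k := harmonic_nodes (x1 - e / 2) (e / 4) k.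
have e4 : 0 < e / 4 by rewrite divr_gt0.
have H_in k y : y \in H k -> x1 - e / 2 < y < x1.
  case/harmonic_nodesP => i ->; have /andP[h1 h2] := div_natS_bounds i e4.
  by move: h1 h2; set q := e / 4 / _ => h1 h2; apply/andP; split; lra.
have H_uniq k : uniq (x1 :: H k).
  rewrite /= harmonic_nodes_uniq ?gt_eqF // andbT.
  by apply/negP => /H_in; rewrite ltxx andbF.
have H_sub k : {subset H k <= I}.
  by move=> y /H_in /andP[h1 h2]; apply: ball; rewrite ltr_norml; apply/andP; split; lra.
have H_gt0 k : 0 < nodal (H k) by apply: nodal_gt0 => y /H_in /andP[].
exists (H m.+1), (x1 + e / 4 :: H m); split; first by split; rewrite ?size_mkseq.
split; [|by rewrite /= size_mkseq| |].
- rewrite /= inE negb_or -{1}(addr0 x1) (inj_eq (addrI _)) eq_sym gt_eqF //=.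
  move: (H_uniq m) => /= /andP[-> ->]; rewrite andbT.
  by apply/negP => /H_in; lra.
- move=> y /[!inE] /orP[/eqP->|/H_sub //]; apply: ball.
  by rewrite addrC addKr ger0_norm ?ltW //; lra.
- by rewrite nodal_cons pmulr_llt0 //; lra.
Qed.

End Separation.

(* [c] is the supremum of [slope_extrap] over node sets with positive [nodal]. *)
Lemma slope_convex (R : realType) m (I : interval R) f x1 :
  seq_convex m.+1 I f -> in_interior I x1 -> exists c, seq_convex m I (slope f x1 c).
Proof.
move=> fconv [e [e0 ball]].
pose E v := exists S, [/\ uniq (x1 :: S), size S = m.+1, {subset S <= I},
  0 < nodal x1 S & v = slope_extrap f x1 S].
have E_ub S : uniq (x1 :: S) -> size S = m.+1 -> {subset S <= I} -> nodal x1 S < 0 ->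
    classical_sets.ubound E (slope_extrap f x1 S).
  by move=> U sz SI pS _ [S' [U' sz' SI' pS' ->]]; apply: (slope_extrap_le e0 ball fconv).
have [S0 [S1 [[U0 sz0 SI0 pS0] [U1 sz1 SI1 pS1]]]] := ex_nodes_nodal_pos_neg e0 ball m.
have E_has_ub : classical_sets.has_ubound E by exists (slope_extrap f x1 S1); apply: E_ub.
have E_nonempty : classical_sets.nonempty E by exists (slope_extrap f x1 S0), S0.
exists (sup E) => Y uY sY YI.
have [x1Y|x1Y] := boolP (x1 \in Y); last first.
  rewrite ddiff_slope ?cons_uniq ?x1Y //; last by apply/eqP => Y0; move: sY; rewrite Y0.
  apply: fconv => [||y]; [by rewrite cons_uniq x1Y | by rewrite /= sY | ].
  by move=> /[!inE] /orP[/eqP->|/YI //]; apply: center_in_ball e0 ball.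
have P := perm_to_rem x1Y; set S := rem x1 Y in P.
have U : uniq (x1 :: S) by rewrite -(perm_uniq P).
have sz : size S = m.+1 by rewrite size_rem // sY.
have SI : {subset S <= I} by move=> y /mem_rem; apply: YI.
rewrite (ddiff_perm _ P) ddiff_slope_cons //.
have nS : nodal x1 S != 0 by apply: nodal_neq0; case/andP: U.
have [pS|pS|/eqP] := ltgtP (nodal x1 S) 0; last by rewrite (negbTE nS).
  have : sup E <= slope_extrap f x1 S by apply: ge_sup => //; apply: E_ub.
  by rewrite -subr_ge0 => h; rewrite -mulrNN -invrN opprB divr_ge0 // oppr_ge0 ltW.
have : slope_extrap f x1 S <= sup E by apply: ub_le_sup => //; exists S.
by rewrite -subr_ge0 => h; rewrite divr_ge0 // ltW.
Qed.

Lemma slope2_poly_minorant (R : realType) (I : interval R) f x1 c d (r : {poly R}) :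
  (forall y, y \in I -> y != x1 -> r.[y] <= slope (slope f x1 c) x1 d y) ->
  exists p : {poly R},
    [/\ (size p <= (size r).+2)%N, p.[x1] = f x1 & forall y, y \in I -> p.[y] <= f y].
Proof.
move=> r_le; exists ((f x1)%:P + ('X - x1%:P) * (c%:P + ('X - x1%:P) * r)); split.
- apply: leq_trans (size_polyD _ _) _; rewrite geq_max (leq_trans (size_polyC_leq1 _)) //=.
  apply: leq_trans (size_polyMleq _ _) _; rewrite size_XsubC /=.
  apply: leq_trans (size_polyD _ _) _; rewrite geq_max (leq_trans (size_polyC_leq1 _)) //=.
  by apply: leq_trans (size_polyMleq _ _) _; rewrite size_XsubC.
- by rewrite !hornerE subrr !mul0r addr0.
move=> y yI; rewrite !hornerE.
have [->|yx1] := eqVneq y x1; first by rewrite subrr !mul0r addr0.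
have := r_le y yI yx1; rewrite /slope (negbTE yx1) eqxx; set q := r.[y] => q_le.
have yx1' : y - x1 != 0 by rewrite subr_eq0.
have -> : f y = f x1 + (y - x1) * (c + (y - x1) * q) +
    (y - x1) ^+ 2 * ((((f y - f x1) / (y - x1) - c) / (y - x1)) - q) by field.
by rewrite lerDl mulr_ge0 ?sqr_ge0 // subr_ge0.
Qed.

Lemma odd_convex_poly_minorant (R : realType) (I : interval R) k f x1 :
  seq_convex k.*2.+1 I f -> in_interior I x1 ->
  exists p : {poly R},
    [/\ (size p <= k.*2.+2)%N, p.[x1] = f x1 & forall y, y \in I -> p.[y] <= f y].
Proof.
move=> fconv x1_int; have x1I : x1 \in I by case: x1_int => e [e0 /center_in_ball]; apply.
elim: k f fconv => [|k IH] f fconv.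
  have [c gconv] := slope_convex fconv x1_int.
  have [y yI yx1|p [sp px1 p_le]] := @slope2_poly_minorant _ I f x1 c 0 0.
    have := gconv [:: y; x1]; rewrite horner0 ddiff2 // /slope (negbTE yx1) eqxx; apply => //.
      by rewrite /= inE yx1.
    by move=> z /[!inE] /orP[] /eqP->.
  by exists p; rewrite size_poly0 in sp.
rewrite doubleS in fconv.
have [c gconv] := slope_convex fconv x1_int.
have [d hconv] := slope_convex gconv x1_int.
have [r [sr _ r_le]] := IH _ hconv.
have [p [sp px1 p_le]] := @slope2_poly_minorant _ _ f x1 c d r (fun y yI _ => r_le y yI).
by exists p; split => //; rewrite doubleS (leq_trans sp).
Qed.

Unset Implicit Arguments.

Theorem corollary1 (R : realType) (I : interval R) (n : nat) (f : R -> R) :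
  odd n -> n_convex n I f ->
  forall x1 : R, in_interior I x1 ->
  exists p : {poly R},
    (size p <= n.+1)%N /\ p.[x1] = f x1 /\ (forall x : R, x \in I -> p.[x] <= f x).
Proof.
move=> n_odd fconv x1 x1_int.
have nE : n = (n./2).*2.+1 by rewrite -[n in LHS]odd_double_half n_odd.
move: fconv; rewrite nE => /n_convex_seq_convex fconv.
by have [p [? ? ?]] := odd_convex_poly_minorant fconv x1_int; exists p.
Qed.
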